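(* On the class of reflexive bimodal models, $\mathcal{L}(\boxdot)$ is less expressive than $\mathcal{L}(\boxplus)$: every $\mathcal{L}(\boxdot)$-formula is equivalent on this class to some $\mathcal{L}(\boxplus)$-formula, but some $\mathcal{L}(\boxplus)$-formula is not equivalent on this class to any $\mathcal{L}(\boxdot)$-formula.
   Context: Fix a nonempty set $\mathbf{P}$ of propositional variables. A bimodal model is $\mathcal{M}=\langle S,R_1,R_2,V\rangle$ with $S$ a nonempty set, $R_1,R_2\subseteq S\times S$, and $V:\mathbf{P}\to\mathcal{P}(S)$. A bimodal model is reflexive if both $R_1$ and $R_2$ are reflexive. Write $R_i(s)=\{t\mid sR_it\}$. The languages are $\mathcal{L}(\boxdot):\ \phi::=p\mid\neg\phi\mid(\phi\wedge\phi)\mid\boxdot\phi$ and $\mathcal{L}(\boxplus):\ \phi::=p\mid\neg\phi\mid(\phi\wedge\phi)\mid\boxplus\phi$. Truth: $\mathcal{M},s\vDash p$ iff $s\in V(p)$; Booleans as usual; $\mathcal{M},s\vDash\boxdot\phi$ iff for all $t,u$ with $sR_1t$ and $sR_2u$, ($\mathcal{M},t\vDash\phi\iff\mathcal{M},u\vDash\phi$); $\mathcal{M},s\vDash\boxplus\phi$ iff ($\mathcal{M},t\vDash\phi$ for all $t\in R_1(s)$) or ($\mathcal{M},u\vDash\neg\phi$ for all $u\in R_2(s)$). Two formulas are equivalent on a class of models if they are true at exactly the same pointed models of that class. *)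

From Stdlib Require Import Classical.

Set Implicit Arguments.

Inductive fdot (P : Type) : Type :=
| DVar : P -> fdot P
| DNeg : fdot P -> fdot P
| DAnd : fdot P -> fdot P -> fdot P
| DBox : fdot P -> fdot P.

Inductive fplus (P : Type) : Type :=
| PVar : P -> fplus P
| PNeg : fplus P -> fplus P
| PAnd : fplus P -> fplus P -> fplus P
| PBox : fplus P -> fplus P.

Arguments DVar {P} _.  Arguments DNeg {P} _.  Arguments DAnd {P} _ _.  Arguments DBox {P} _.
Arguments PVar {P} _.  Arguments PNeg {P} _.  Arguments PAnd {P} _ _.  Arguments PBox {P} _.

Record model (P : Type) : Type := Model {
  St : Type;
  st_inh : inhabited St;
  R1 : St -> St -> Prop;
  R2 : St -> St -> Prop;
  Val : P -> St -> Prop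
}.

Definition reflexive_model (P : Type) (M : model P) : Prop :=
  (forall s, R1 M s s) /\ (forall s, R2 M s s).

Fixpoint sat_dot (P : Type) (M : model P) (s : St M) (f : fdot P) : Prop :=
  match f with
  | DVar p => Val M p s
  | DNeg g => ~ sat_dot M s g
  | DAnd g h => sat_dot M s g /\ sat_dot M s h
  | DBox g => forall t u, R1 M s t -> R2 M s u -> (sat_dot M t g <-> sat_dot M u g)
  end.

Fixpoint sat_plus (P : Type) (M : model P) (s : St M) (f : fplus P) : Prop :=
  match f with
  | PVar p => Val M p s
  | PNeg g => ~ sat_plus M s g
  | PAnd g h => sat_plus M s g /\ sat_plus M s h
  | PBox g => (forall t, R1 M s t -> sat_plus M t g)
              \/ (forall u, R2 M s u -> ~ sat_plus M u g)
  end.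

Definition equiv_refl (P : Type) (f : fdot P) (g : fplus P) : Prop :=
  forall (M : model P) (s : St M), reflexive_model M ->
    (sat_dot M s f <-> sat_plus M s g).

(* On reflexive models the two boxes are interdefinable one way: boxdot phi says that
   phi is constant on R1(s) u R2(s), and since s lies in both sets this holds iff
   phi holds throughout or fails throughout, i.e. iff boxplus phi /\ boxplus ~phi.
   Conversely boxdot is symmetric in R1 and R2, so no L(boxdot)-formula can tell a
   model from the one with R1 and R2 exchanged, whereas boxplus p can. *)
From Stdlib Require Import Classical.

Lemma agree_iff_both_all_or_none {S : Type} (R1 R2 : S -> S -> Prop) (Q : S -> Prop)
    (s : S) : R1 s s -> R2 s s ->
  (forall t u, R1 s t -> R2 s u -> (Q t <-> Q u)) <->
  ((forall t, R1 s t -> Q t) \/ (forall u, R2 s u -> ~ Q u)) /\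
  ((forall t, R1 s t -> ~ Q t) \/ (forall u, R2 s u -> ~ ~ Q u)).
Proof.
  intros r1 r2; split.
  - intro agree; destruct (classic (Q s)) as [Qs | nQs]; split.
    + left; intros t Ht; apply (agree t s Ht r2), Qs.
    + right; intros u Hu nQu; apply nQu, (agree s u r1 Hu), Qs.
    + right; intros u Hu Qu; apply nQs, (agree s u r1 Hu), Qu.
    + left; intros t Ht Qt; apply nQs, (agree t s Ht r2), Qt.
  - intros [[all1 | none2] [none1 | all2]] t u Ht Hu.
    + exfalso; apply (none1 s r1), all1, r1.
    + split; intros _; [apply NNPP, all2, Hu | apply all1, Ht].
    + split; intro H; exfalso; [apply (none1 t Ht H) | apply (none2 u Hu H)].
    + exfalso; apply (none2 s r2), NNPP, all2, r2.
Qed.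

Fixpoint dot_to_plus {P : Type} (f : fdot P) : fplus P :=
  match f with
  | DVar p => PVar p
  | DNeg g => PNeg (dot_to_plus g)
  | DAnd g h => PAnd (dot_to_plus g) (dot_to_plus h)
  | DBox g => PAnd (PBox (dot_to_plus g)) (PBox (PNeg (dot_to_plus g)))
  end.

Lemma equiv_refl_dot_to_plus (P : Type) (f : fdot P) : equiv_refl f (dot_to_plus f).
Proof.
  intros M s Hrefl; revert s.
  induction f as [p | g IHg | g IHg h IHh | g IHg]; intro s; simpl.
  - reflexivity.
  - rewrite IHg; reflexivity.
  - rewrite IHg, IHh; reflexivity.
  - destruct Hrefl as [r1 r2].
    rewrite (agree_iff_both_all_or_none (R1 M) (R2 M) (fun x => sat_dot M x g) s
               (r1 s) (r2 s)).
    setoid_rewrite IHg; reflexivity.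
Qed.

Definition swap_model {P : Type} (M : model P) : model P :=
  Model (st_inh M) (R2 M) (R1 M) (Val M).

Lemma reflexive_swap_model {P : Type} {M : model P} :
  reflexive_model M -> reflexive_model (swap_model M).
Proof. intros [r1 r2]; split; assumption. Qed.

Lemma sat_dot_swap_model (P : Type) (M : model P) (f : fdot P) (s : St M) :
  sat_dot (swap_model M) s f <-> sat_dot M s f.
Proof.
  revert s; induction f as [p | g IHg | g IHg h IHh | g IHg]; intro s; simpl.
  - reflexivity.
  - rewrite IHg; reflexivity.
  - rewrite IHg, IHh; reflexivity.
  - setoid_rewrite IHg; split; intros H t u Ht Hu; symmetry; apply H; assumption.
Qed.

Lemma not_equiv_refl_of_swap_sensitive {P : Type} {g : fplus P} {M : model P}
    {s : St M} :
  reflexive_model M -> sat_plus M s g -> ~ sat_plus (swap_model M) s g ->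
  forall f : fdot P, ~ equiv_refl f g.
Proof.
  intros Hrefl Hg Hswap f Hfg; apply Hswap.
  apply (Hfg (swap_model M) s (reflexive_swap_model Hrefl)), sat_dot_swap_model.
  apply (Hfg M s Hrefl), Hg.
Qed.

Definition two_point_model (P : Type) : model P :=
  @Model P bool (inhabits true) (fun x y => x = y)
    (fun x y => x = y \/ (x = true /\ y = false)) (fun _ s => s = true).

Lemma reflexive_two_point_model (P : Type) : reflexive_model (two_point_model P).
Proof. split; simpl; auto. Qed.

Lemma sat_box_var_two_point {P : Type} (p : P) :
  sat_plus (two_point_model P) true (PBox (PVar p)).
Proof. left; simpl; intros t <-; reflexivity. Qed.

Lemma not_sat_box_var_swap_two_point {P : Type} (p : P) :
  ~ sat_plus (swap_model (two_point_model P)) true (PBox (PVar p)).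
Proof.
  simpl; intros [all_true | none_true].
  - discriminate (all_true false (or_intror (conj eq_refl eq_refl))).
  - exact (none_true true eq_refl eq_refl).
Qed.

Theorem proposition3p4 (P : Type) (HP : inhabited P) :
  (forall f : fdot P, exists g : fplus P, equiv_refl f g) /\
  (exists g : fplus P, forall f : fdot P, ~ equiv_refl f g).
Proof.
  split.
  - intro f; exists (dot_to_plus f); apply equiv_refl_dot_to_plus.
  - destruct HP as [p]; exists (PBox (PVar p)).
    exact (not_equiv_refl_of_swap_sensitive (reflexive_two_point_model P)
             (sat_box_var_two_point p) (not_sat_box_var_swap_two_point p)).
Qed.
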